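(* Let $K\ge2$ and $d\ge1$ with $d=2$ or $K\le d+1$. Then the Tammes problem and the Softmax Code problem have the same solutions: $$\operatorname{argmax}_{\mathbf W\in\mathrm{OB}(d,K)}\rho_{\text{one-vs-rest}}(\mathbf W)=\operatorname{argmax}_{\mathbf W\in\mathrm{OB}(d,K)}\rho_{\text{one-vs-one}}(\mathbf W).$$
   Context: $\mathrm{OB}(d,K)$ is the set of real $d\times K$ matrices with unit-norm columns $\mathbf w_1,\dots,\mathbf w_K$. $\operatorname{dist}(\mathbf v,\mathcal W)=\inf\{\|\mathbf v-\mathbf w\|_2:\mathbf w\in\operatorname{conv}(\mathcal W)\}$; $\rho_{\text{one-vs-rest}}(\mathbf W)=\min_k\operatorname{dist}(\mathbf w_k,\{\mathbf w_j\}_{j\ne k})$; $\rho_{\text{one-vs-one}}(\mathbf W)=\min_k\min_{k'\ne k}\|\mathbf w_k-\mathbf w_{k'}\|_2$. *)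

From HB Require Import structures.
From mathcomp Require Import all_boot all_order all_algebra.
From mathcomp Require Import boolp classical_sets reals.
Set Implicit Arguments. Unset Strict Implicit. Unset Printing Implicit Defensive.
Import Order.TTheory GRing.Theory Num.Theory.
Local Open Scope ring_scope.
Local Open Scope classical_set_scope.

Definition vnorm (R : realType) (d : nat) (v : 'cV[R]_d) : R :=
  Num.sqrt (\sum_(i < d) (v i 0) ^+ 2).

Definition OB (R : realType) (d K : nat) : set 'M[R]_(d, K) :=
  [set W | forall k : 'I_K, vnorm (col k W) = 1].

Definition conv_rest (R : realType) (d K : nat) (W : 'M[R]_(d, K)) (k : 'I_K)
  : set 'cV[R]_d :=
  [set v | exists lam : 'I_K -> R,
      (forall j, 0 <= lam j) /\
      \sum_(j < K | j != k) lam j = 1 /\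
      v = \sum_(j < K | j != k) lam j *: col j W].

Definition dist_rest (R : realType) (d K : nat) (W : 'M[R]_(d, K)) (k : 'I_K) : R :=
  inf [set vnorm (col k W - w) | w in conv_rest W k].

Definition rho_one_vs_rest (R : realType) (d K : nat) (W : 'M[R]_(d, K)) : R :=
  inf [set dist_rest W k | k in [set: 'I_K]].

Definition rho_one_vs_one (R : realType) (d K : nat) (W : 'M[R]_(d, K)) : R :=
  inf [set r | exists (k k' : 'I_K), k' != k /\ r = vnorm (col k W - col k' W)].

Definition is_argmax_OB (R : realType) (d K : nat) (f : 'M[R]_(d, K) -> R)
  (W : 'M[R]_(d, K)) : Prop :=
  @OB R d K W /\ forall W', @OB R d K W' -> f W' <= f W.

(* Both problems have the same maximisers: the [W] in [OB(d, K)] all of whose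
   pairwise inner products are at most the optimal coherence [c], which is [-1/(K-1)]
   (regular simplex, [K <= d + 1]) or [cos (2 pi / K)] (regular polygon, [d = 2]).
   For one-vs-one this follows from [|w_k - w_k'|^2 = 2 - 2 <w_k, w_k'>], since every
   [W] has a pair with inner product [>= c] and the regular configuration has none [> c].
   For one-vs-rest, inner products [<= c] give [|w_k - v| >= <w_k, w_k - v> >= 1 - c] on
   the hull of the other columns. Conversely [rho_one_vs_rest <= 1 - c] always, and
   equality forces all inner products [<= c]. For the simplex, the squared distances from
   [w_k] to the centroid of the other columns average to [(1 + b)^2 - b^2 |sum_j w_j|^2],
   [b = 1/(K-1)]; equality forces [sum_j w_j = 0], the centroid is then a nearest point
   of the hull, and the first-order condition there bounds [<w_k, w_j>]. For the polygon,
   order the columns by angle; if [a, b] are the gaps around [w_k], the chord between its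
   two neighbours passes within [2 sin (a/2) sin (b/2) <= 1 - cos ((a+b)/2)] of [w_k], and
   as the gaps sum to [2 pi], equality forces every gap to be [2 pi / K]. *)

From mathcomp Require Import all_boot all_order all_algebra.
From mathcomp Require Import boolp reals.
From mathcomp Require Import trigo.
From mathcomp Require Import ring lra zify.
Import Order.TTheory GRing.Theory Num.Theory.
Local Open Scope ring_scope.
Set Implicit Arguments. Unset Strict Implicit. Unset Printing Implicit Defensive.

Section InnerProduct.
Variables (R : realType) (d : nat).
Implicit Types u v w : 'cV[R]_d.

Definition dot u v : R := \sum_(i < d) u i 0 * v i 0.

Lemma dotC u v : dot u v = dot v u.
Proof. by apply: eq_bigr => i _; rewrite mulrC. Qed.

Lemma dotDl u v w : dot (u + v) w = dot u w + dot v w.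
Proof. by rewrite /dot -big_split; apply: eq_bigr => i _; rewrite !mxE mulrDl. Qed.

Lemma dotBl u v w : dot (u - v) w = dot u w - dot v w.
Proof. by rewrite /dot -sumrB; apply: eq_bigr => i _; rewrite !mxE mulrBl. Qed.

Lemma dotZl a u w : dot (a *: u) w = a * dot u w.
Proof. by rewrite /dot mulr_sumr; apply: eq_bigr => i _; rewrite !mxE mulrA. Qed.

Lemma dotDr u v w : dot w (u + v) = dot w u + dot w v.
Proof. by rewrite dotC dotDl !(dotC w). Qed.

Lemma dotBr u v w : dot w (u - v) = dot w u - dot w v.
Proof. by rewrite dotC dotBl !(dotC w). Qed.

Lemma dotZr a u w : dot w (a *: u) = a * dot w u.
Proof. by rewrite dotC dotZl dotC. Qed.

Lemma dot_sumr (I : finType) (P : pred I) (F : I -> 'cV[R]_d) w :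
  dot w (\sum_(j | P j) F j) = \sum_(j | P j) dot w (F j).
Proof.
elim/big_rec2: _ => [|j y x _ <-]; last by rewrite dotDr.
by rewrite /dot big1 // => i _; rewrite mxE mulr0.
Qed.

Lemma dot_suml (I : finType) (P : pred I) (F : I -> 'cV[R]_d) w :
  dot (\sum_(j | P j) F j) w = \sum_(j | P j) dot (F j) w.
Proof. by rewrite dotC dot_sumr; apply: eq_bigr => j _; apply: dotC. Qed.

Lemma dotBB u v : dot (u - v) (u - v) = dot u u - 2 * dot u v + dot v v.
Proof. by rewrite dotBl !dotBr (dotC v u); ring. Qed.

Lemma dot_self_ge0 u : 0 <= dot u u.
Proof. by apply: sumr_ge0 => i _; rewrite -expr2 sqr_ge0. Qed.

Lemma vnormE u : vnorm u = Num.sqrt (dot u u).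
Proof. by rewrite /vnorm /dot; congr Num.sqrt; apply: eq_bigr => i _; rewrite expr2. Qed.

Lemma vnorm_ge0 u : 0 <= vnorm u.
Proof. by rewrite vnormE sqrtr_ge0. Qed.

Lemma sqr_vnorm u : vnorm u ^+ 2 = dot u u.
Proof. by rewrite vnormE sqr_sqrtr // dot_self_ge0. Qed.

Lemma dot_unit u : vnorm u = 1 -> dot u u = 1.
Proof. by move=> u1; rewrite -sqr_vnorm u1 expr1n. Qed.

(* Cauchy-Schwarz against a unit vector [e]: expand [|x - <e,x> e|^2 >= 0]. *)
Lemma sqr_dot_unit_le e x : vnorm e = 1 -> dot e x ^+ 2 <= dot x x.
Proof.
move=> /dot_unit e1; have := dot_self_ge0 (x - dot e x *: e).
by rewrite dotBB !dotZl !dotZr e1 (dotC x e); lra.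
Qed.

Lemma dot_unit_le_vnorm e x : vnorm e = 1 -> dot e x <= vnorm x.
Proof.
move=> e1; rewrite vnormE (le_trans (ler_norm _)) // -sqrtr_sqr.
by rewrite ler_sqrt ?dot_self_ge0 ?sqr_dot_unit_le.
Qed.

Lemma vnormB_unit u v : vnorm u = 1 -> vnorm v = 1 ->
  vnorm (u - v) = Num.sqrt (2 - 2 * dot u v).
Proof.
by move=> /dot_unit u1 /dot_unit v1; rewrite vnormE dotBB u1 v1; congr Num.sqrt; lra.
Qed.

End InnerProduct.

Section Infima.
Variables (R : realType) (d K : nat).
Hypothesis K_ge2 : (2 <= K)%N.
Implicit Types W : 'M[R]_(d, K).

Lemma exists_neq_ord (k : 'I_K) : exists j : 'I_K, j != k.
Proof.
have K_gt0 : (0 < K)%N by apply: leq_trans K_ge2.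
have [k0|k_neq0] := eqVneq (val k) 0%N.
- by exists (Ordinal K_ge2); apply/eqP => /(congr1 val); rewrite k0.
- by exists (Ordinal K_gt0); apply/eqP => eq0k; rewrite -eq0k in k_neq0.
Qed.

Lemma conv_rest_col W k j : j != k -> conv_rest W k (col j W).
Proof.
move=> jk; exists (fun i => (i == j)%:R); split; [|split].
- by move=> i; rewrite ler0n.
- by rewrite (bigD1 j) //= eqxx big1 ?addr0 // => i /andP[_ /negbTE ->].
- rewrite (bigD1 j) //= eqxx scale1r big1 ?addr0 // => i /andP[_ /negbTE ->].
  by rewrite scale0r.
Qed.

Lemma conv_rest_convex W k u v t : conv_rest W k u -> conv_rest W k v ->
  0 <= t <= 1 -> conv_rest W k ((1 - t) *: u + t *: v).
Proof.
move=> [lu [lu0 [lu1 ->]]] [lv [lv0 [lv1 ->]]] /andP[t0 t1].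
exists (fun j => (1 - t) * lu j + t * lv j); split; [|split].
- by move=> j; apply: addr_ge0; apply: mulr_ge0; rewrite ?subr_ge0.
- by rewrite big_split /= -!mulr_sumr lu1 lv1 !mulr1 subrK.
- rewrite !scaler_sumr -big_split /=; apply: eq_bigr => j _.
  by rewrite !scalerA -scalerDl.
Qed.

Lemma dist_rest_le W k v : conv_rest W k v -> dist_rest W k <= vnorm (col k W - v).
Proof.
move=> kv; apply: ge_inf; last by exists v.
by exists 0 => y [w _ <-]; apply: vnorm_ge0.
Qed.

Lemma dist_rest_lb W k c :
  (forall v, conv_rest W k v -> c <= vnorm (col k W - v)) -> c <= dist_rest W k.
Proof.
move=> lb; apply: lb_le_inf; last by move=> y [w kw <-]; apply: lb.
have [j jk] := exists_neq_ord k.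
by exists (vnorm (col k W - col j W)), (col j W) => //; apply: conv_rest_col.
Qed.

Lemma rho_rest_le_dist W k : rho_one_vs_rest W <= dist_rest W k.
Proof.
apply: ge_inf; last by exists k.
by exists 0 => y [j _ <-]; apply: dist_rest_lb => v _; apply: vnorm_ge0.
Qed.

Lemma rho_rest_lb W c : (forall k, c <= dist_rest W k) -> c <= rho_one_vs_rest W.
Proof.
move=> lb; apply: lb_le_inf; last by move=> y [k _ <-]; apply: lb.
by exists (dist_rest W (Ordinal K_ge2)), (Ordinal K_ge2).
Qed.

Lemma rho_one_le_vnorm W (k k' : 'I_K) : k' != k ->
  rho_one_vs_one W <= vnorm (col k W - col k' W).
Proof.
move=> kk'; apply: ge_inf; last by exists k, k'.
by exists 0 => y [j [j' [_ ->]]]; apply: vnorm_ge0.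
Qed.

Lemma rho_one_lb W c :
  (forall k k' : 'I_K, k' != k -> c <= vnorm (col k W - col k' W)) ->
  c <= rho_one_vs_one W.
Proof.
move=> lb; apply: lb_le_inf; last by move=> y [j [j' [jj' ->]]]; apply: lb.
have [j jk] := exists_neq_ord (Ordinal K_ge2).
by exists (vnorm (col (Ordinal K_ge2) W - col j W)), (Ordinal K_ge2), j.
Qed.

End Infima.

Section CoherenceCriterion.
Variables (R : realType) (d K : nat).
Hypothesis K_ge2 : (2 <= K)%N.
Implicit Types W : 'M[R]_(d, K).

Definition pairwise_dot_le W (c : R) :=
  forall k k' : 'I_K, k' != k -> dot (col k W) (col k' W) <= c.

(* For [v] in the hull, [<w_k, w_k - v> >= 1 - c] bounds [|w_k - v|] from below. *)
Lemma rho_rest_ge_of_dot_le W c : OB W -> pairwise_dot_le W c ->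
  1 - c <= rho_one_vs_rest W.
Proof.
move=> W_OB Wc; apply: rho_rest_lb => // k.
apply: dist_rest_lb => // _ [lam [lam0 [lam1 ->]]].
apply: le_trans (dot_unit_le_vnorm _ (W_OB k)).
rewrite dotBr dot_unit // dot_sumr lerD2l lerN2.
rewrite -[c]mul1r -lam1 mulr_suml; apply: ler_sum => j jk.
by rewrite dotZr ler_wpM2l //; apply: Wc.
Qed.

Lemma rho_one_ge_iff W c : OB W ->
  Num.sqrt (2 - 2 * c) <= rho_one_vs_one W <-> pairwise_dot_le W c.
Proof.
move=> W_OB; have dot_le1 k k' : 0 <= 2 - 2 * dot (col k W) (col k' W).
  by have := dot_self_ge0 (col k W - col k' W); rewrite dotBB !dot_unit //; lra.
split=> [rho_ge k k' kk' | Wc].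
- have := le_trans rho_ge (rho_one_le_vnorm W kk').
  by rewrite vnormB_unit // ler_sqrt //; lra.
- apply: rho_one_lb => // k k' kk'.
  by rewrite vnormB_unit // ler_sqrt //; have := Wc k k' kk'; lra.
Qed.

Lemma rho_one_le_of_dot_ge W c (k k' : 'I_K) : OB W -> k' != k ->
  c <= dot (col k W) (col k' W) -> rho_one_vs_one W <= Num.sqrt (2 - 2 * c).
Proof.
move=> W_OB kk' c_le; apply: le_trans (rho_one_le_vnorm W kk') _.
have := dot_unit_le_vnorm (col k' W) (W_OB k); rewrite W_OB => dot_le1.
by rewrite vnormB_unit // ler_sqrt; lra.
Qed.

Variable c : R.
Hypothesis dot_ge_somewhere : forall W, OB W ->
  exists k k' : 'I_K, k' != k /\ c <= dot (col k W) (col k' W).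
Hypothesis pairwise_dot_le_attained : exists W0, OB W0 /\ pairwise_dot_le W0 c.

Lemma argmax_one_vs_one_iff W :
  is_argmax_OB (@rho_one_vs_one R d K) W <-> OB W /\ pairwise_dot_le W c.
Proof.
have [W0 [W0_OB W0c]] := pairwise_dot_le_attained.
have rho_one_le W' : OB W' -> rho_one_vs_one W' <= Num.sqrt (2 - 2 * c).
  by move=> W'_OB; have [k [k' [kk' c_le]]] := dot_ge_somewhere W'_OB;
    apply: rho_one_le_of_dot_ge c_le.
split=> [[W_OB W_max] | [W_OB Wc]]; split=> //.
- by apply/(rho_one_ge_iff _ W_OB)/(le_trans _ (W_max _ W0_OB))/rho_one_ge_iff.
- by move=> W' W'_OB; apply: le_trans (rho_one_le _ W'_OB) _; apply/rho_one_ge_iff.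
Qed.

Hypothesis rho_rest_ub : forall W, OB W -> rho_one_vs_rest W <= 1 - c.
Hypothesis pairwise_dot_le_of_rho_rest : forall W, OB W ->
  1 - c <= rho_one_vs_rest W -> pairwise_dot_le W c.

Lemma argmax_one_vs_rest_iff W :
  is_argmax_OB (@rho_one_vs_rest R d K) W <-> OB W /\ pairwise_dot_le W c.
Proof.
have [W0 [W0_OB W0c]] := pairwise_dot_le_attained.
split=> [[W_OB W_max] | [W_OB Wc]]; split=> //.
- apply: pairwise_dot_le_of_rho_rest => //.
  exact: le_trans (rho_rest_ge_of_dot_le W0_OB W0c) (W_max _ W0_OB).
- by move=> W' W'_OB; apply: le_trans (rho_rest_ub W'_OB) (rho_rest_ge_of_dot_le W_OB Wc).
Qed.

Lemma argmax_rest_iff_one W :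
  is_argmax_OB (@rho_one_vs_rest R d K) W <-> is_argmax_OB (@rho_one_vs_one R d K) W.
Proof. by rewrite argmax_one_vs_rest_iff argmax_one_vs_one_iff. Qed.

End CoherenceCriterion.

Section Averaging.
Variables (R : realDomainType) (I : finType).
Implicit Types (P : pred I) (F G : I -> R).

Lemma exists_le_of_sumr_le P F G : (exists i, P i) ->
  \sum_(i | P i) F i <= \sum_(i | P i) G i -> exists2 i, P i & F i <= G i.
Proof.
move=> [i0 Pi0] sum_le.
have [/existsP[i /andP[Pi le_i]]|/existsPn G_lt] := boolP [exists i, P i && (F i <= G i)].
  by exists i.
suff : \sum_(i | P i) G i < \sum_(i | P i) F i by rewrite ltNge sum_le.
apply: ltr_sum; first by apply/hasP; exists i0; rewrite ?mem_index_enum.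
by move=> i Pi; have := G_lt i; rewrite Pi /= -ltNge.
Qed.

Lemma eq_of_sumr_eq_ge F G : (forall i, G i <= F i) ->
  \sum_i F i = \sum_i G i -> forall i, F i = G i.
Proof.
move=> G_le sum_eq i; apply/eqP; rewrite -subr_eq0; apply/eqP.
apply: (@psumr_eq0P _ _ xpredT (fun i => F i - G i)) => // [j _|].
  by rewrite subr_ge0.
by rewrite sumrB sum_eq subrr.
Qed.

End Averaging.

Lemma slope_le0_of_min_at0 (R : realFieldType) (A B N : R) : 0 <= N ->
  (forall t, 0 <= t <= 1 -> A <= A - 2 * t * B + t ^+ 2 * N) -> B <= 0.
Proof.
move=> N_ge0 min_at0; rewrite leNgt; apply/negP => B_gt0.
have [N_le_B|B_lt_N] := lerP N B.
  by have := min_at0 1; rewrite ler01 lexx expr1n; move/(_ isT); lra.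
have N_gt0 : 0 < N by lra.
have t01 : 0 <= B / N <= 1.
  by rewrite divr_ge0 ?(ltW B_gt0) //= ler_pdivrMr // mul1r (ltW B_lt_N).
have := min_at0 _ t01; rewrite expr2 -!mulrA mulVf ?gt_eqF // mulr1.
have : 0 < B * (B / N) by rewrite mulr_gt0 // divr_gt0.
lra.
Qed.

Section SimplexBound.
Variables (R : realType) (d K : nat).
Hypothesis K_ge2 : (2 <= K)%N.
Implicit Types W : 'M[R]_(d, K).

Let b : R := (K%:R - 1)^-1.

Lemma simplex_b_gt0 : 0 < b.
Proof. by rewrite invr_gt0 subr_gt0 (@ltr_nat R 1 K). Qed.

Lemma simplex_bK : (K%:R - 1) * b = 1.
Proof. by rewrite mulfV // gt_eqF // subr_gt0 (@ltr_nat R 1 K). Qed.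

Lemma sumr_neq (V : zmodType) (F : 'I_K -> V) k :
  \sum_(j | j != k) F j = \sum_j F j - F k.
Proof. by rewrite [X in _ = X - _](bigD1 k) //= addrAC subrr add0r. Qed.

Lemma sumr_neq_const k (x : R) : \sum_(j < K | j != k) x = (K%:R - 1) * x.
Proof. by rewrite sumr_neq sumr_const card_ord mulrBl mul1r mulr_natl. Qed.

Definition colsum W : 'cV[R]_d := \sum_j col j W.

Definition centroid_rest W k : 'cV[R]_d := b *: (colsum W - col k W).

Lemma conv_rest_centroid W k : conv_rest W k (centroid_rest W k).
Proof.
exists (fun _ => b); split; [|split].
- by move=> _; apply: ltW simplex_b_gt0.
- by rewrite sumr_neq_const simplex_bK.
- by rewrite -scaler_sumr sumr_neq.
Qed.

Lemma colB_centroid W k :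
  col k W - centroid_rest W k = (1 + b) *: col k W - b *: colsum W.
Proof. by rewrite /centroid_rest scalerBr scalerDl scale1r opprB addrA addrAC. Qed.

Lemma sum_dot_colsum W : \sum_k dot (col k W) (colsum W) = dot (colsum W) (colsum W).
Proof. by rewrite [in RHS]dot_suml. Qed.

Lemma sum_dot_neq W : OB W ->
  \sum_k \sum_(j | j != k) dot (col k W) (col j W) = dot (colsum W) (colsum W) - K%:R.
Proof.
move=> W_OB; have -> : (K%:R : R) = \sum_(k < K) 1 by rewrite sumr_const card_ord.
rewrite -sum_dot_colsum -sumrB; apply: eq_bigr => k _.
by rewrite sumr_neq -dot_sumr dot_unit.
Qed.

(* The off-diagonal inner products sum to [|colsum W|^2 - K >= -K = K (K - 1) (-b)]. *)
Lemma simplex_dot_ge_somewhere W : OB W ->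
  exists k k' : 'I_K, k' != k /\ - b <= dot (col k W) (col k' W).
Proof.
move=> W_OB; have [k _ row_le] : exists2 k : 'I_K, true &
    \sum_(j | j != k) - b <= \sum_(j | j != k) dot (col k W) (col j W).
  apply: exists_le_of_sumr_le; first by exists (Ordinal K_ge2).
  under eq_bigr do rewrite sumr_neq_const mulrN simplex_bK.
  rewrite sum_dot_neq // sumr_const card_ord -mulNrn.
  by have := dot_self_ge0 (colsum W); lra.
have [k' kk' le_dot] := exists_le_of_sumr_le (exists_neq_ord K_ge2 k) row_le.
by exists k, k'.
Qed.

Lemma sum_sqr_dist_centroid W : OB W ->
  \sum_k dot (col k W - centroid_rest W k) (col k W - centroid_rest W k)
  = K%:R * (1 + b) ^+ 2 - K%:R * b ^+ 2 * dot (colsum W) (colsum W).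
Proof.
move=> W_OB; set S := dot (colsum W) (colsum W).
rewrite (eq_bigr (fun k => ((1 + b) ^+ 2 + b ^+ 2 * S)
                           - 2 * (1 + b) * b * dot (col k W) (colsum W))); last first.
  by move=> k _; rewrite colB_centroid dotBB !dotZl !dotZr dot_unit // -/S; ring.
rewrite sumrB -mulr_sumr sum_dot_colsum -/S sumr_const card_ord -[_ *+ K]mulr_natl.
have -> : (K%:R : R) = b^-1 + 1 by rewrite invrK; ring.
by field; rewrite gt_eqF // simplex_b_gt0.
Qed.

Lemma simplex_rho_rest_ub W : OB W -> rho_one_vs_rest W <= 1 + b.
Proof.
move=> W_OB; have b_gt0 := simplex_b_gt0.
have [k _ near_k] : exists2 k : 'I_K, true &
    dot (col k W - centroid_rest W k) (col k W - centroid_rest W k) <= (1 + b) ^+ 2.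
  apply: exists_le_of_sumr_le; first by exists (Ordinal K_ge2).
  rewrite sum_sqr_dist_centroid // sumr_const card_ord -[(1 + b) ^+ 2 *+ K]mulr_natl.
  suff : 0 <= (K%:R : R) * b ^+ 2 * dot (colsum W) (colsum W) by lra.
  by rewrite mulr_ge0 ?dot_self_ge0 // mulr_ge0 ?sqr_ge0 ?ler0n.
apply: le_trans (rho_rest_le_dist K_ge2 W k) _.
apply: le_trans (dist_rest_le (conv_rest_centroid W k)) _.
have b1_ge0 : 0 <= 1 + b by lra.
by rewrite vnormE -(ger0_norm b1_ge0) -sqrtr_sqr ler_sqrt ?sqr_ge0.
Qed.

Section Equality.
Variable W : 'M[R]_(d, K).
Hypothesis W_OB : OB W.
Hypothesis rho_ge : 1 + b <= rho_one_vs_rest W.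

Lemma sqr_dist_rest_ge k v : conv_rest W k v ->
  (1 + b) ^+ 2 <= dot (col k W - v) (col k W - v).
Proof.
move=> kv; have b1_ge0 : 0 <= 1 + b by have := simplex_b_gt0; lra.
rewrite -sqr_vnorm ler_pXn2r ?nnegrE ?vnorm_ge0 //.
exact: le_trans rho_ge (le_trans (rho_rest_le_dist K_ge2 W k) (dist_rest_le kv)).
Qed.

Lemma colsum_sqr_eq0 : dot (colsum W) (colsum W) = 0.
Proof.
have : \sum_(k < K) (1 + b) ^+ 2 <=
    \sum_k dot (col k W - centroid_rest W k) (col k W - centroid_rest W k).
  by apply: ler_sum => k _; apply/sqr_dist_rest_ge/conv_rest_centroid.
rewrite sum_sqr_dist_centroid // sumr_const card_ord -[(1 + b) ^+ 2 *+ K]mulr_natl.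
have Kb2_gt0 : 0 < (K%:R : R) * b ^+ 2.
  by rewrite mulr_gt0 ?exprn_gt0 ?simplex_b_gt0 // ltr0n (leq_trans _ K_ge2).
move=> sum_ge; apply/eqP; rewrite eq_le dot_self_ge0 andbT -(pmulr_rle0 _ Kb2_gt0).
lra.
Qed.

Lemma dot_colsum_eq0 k : dot (col k W) (colsum W) = 0.
Proof.
apply/eqP; rewrite -sqrf_eq0 eq_le sqr_ge0 andbT -colsum_sqr_eq0.
exact: sqr_dot_unit_le.
Qed.

(* Each point of the hull is at distance [>= 1 + b = |x|] from [w_k], so [t = 0]
   minimises [|x - t y|] on [[0, 1]] and the slope [<x, y>] is [<= 0]. *)
Lemma simplex_pairwise_dot_le : pairwise_dot_le W (- b).
Proof.
move=> k j jk; have b_gt0 := simplex_b_gt0.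
set x := col k W - centroid_rest W k; set y := col j W - centroid_rest W k.
have xx : dot x x = (1 + b) ^+ 2.
  by rewrite /x colB_centroid dotBB !dotZl !dotZr dot_unit //
    dot_colsum_eq0 colsum_sqr_eq0; ring.
have xy : dot x y = (1 + b) * (dot (col k W) (col j W) + b).
  rewrite /x /y colB_centroid /centroid_rest !(dotBl, dotBr, dotZl, dotZr).
  rewrite (dotC (colsum W) (col j W)) (dotC (colsum W) (col k W)) !dot_colsum_eq0.
  by rewrite colsum_sqr_eq0 (dot_unit (W_OB k)); ring.
have : dot x y <= 0.
  apply: (@slope_le0_of_min_at0 _ (dot x x) _ (dot y y) (dot_self_ge0 y)) => t t01.
  have := sqr_dist_rest_ge
    (conv_rest_convex (conv_rest_centroid W k) (conv_rest_col W jk) t01).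
  have -> : col k W - ((1 - t) *: centroid_rest W k + t *: col j W) = x - t *: y.
    by rewrite /x /y; apply/matrixP => i l; rewrite !mxE; ring.
  by rewrite dotBB !dotZr !dotZl xx; lra.
by rewrite xy pmulr_rle0 ?ltr_wpDl //; lra.
Qed.

End Equality.
End SimplexBound.

Section RegularSimplex.
Variables (R : realType) (d n : nat).
Hypotheses (n_gt0 : (0 < n)%N) (n_le_d : (n <= d)%N).

Let N : R := n%:R.
Let r : R := (Num.sqrt N)^-1.
Let p : R := Num.sqrt ((N + 1) / N).
Let q : R := - (r + p) / N.

Lemma simplex_N_gt0 : 0 < N. Proof. by rewrite ltr0n. Qed.

Lemma simplex_r2 : r ^+ 2 = N^-1.
Proof. by rewrite exprVn sqr_sqrtr // ltW // simplex_N_gt0. Qed.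

Lemma simplex_p2 : p ^+ 2 = (N + 1) / N.
Proof.
by rewrite sqr_sqrtr // divr_ge0 // ltW // ?addr_gt0 // simplex_N_gt0.
Qed.

(* The regular simplex in [R^n]: [p e_k + q 1] for [k < n] and [r 1] for [k = n]. *)
Definition simplex_vertex (k i : nat) : R :=
  if (k < n)%N then p * (i == k)%:R + q else r.

Lemma sum_delta (F : nat -> R) k : (k < n)%N ->
  \sum_(i < n) (i == k :> nat)%:R * F i = F k.
Proof.
move=> kn; rewrite (bigD1 (Ordinal kn)) //= eqxx mul1r big1 ?addr0 // => i ik.
suff /negbTE -> : val i != k by rewrite mul0r.
by apply: contra ik => /eqP ik; apply/eqP/val_inj.
Qed.

Lemma sum_simplex_vertex k : (k < n)%N -> \sum_(i < n) simplex_vertex k i = - r.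
Proof.
move=> kn; under eq_bigr do rewrite /simplex_vertex kn mulrC.
rewrite big_split /= (sum_delta (fun=> p)) // sumr_const card_ord -mulr_natl -/N.
by rewrite /q; field; rewrite gt_eqF // simplex_N_gt0.
Qed.

Lemma simplex_vertex_dot k j : (k <= n)%N -> (j <= n)%N ->
  \sum_(i < n) simplex_vertex k i * simplex_vertex j i = if k == j then 1 else - N^-1.
Proof.
have N_neq0 : N != 0 by rewrite gt_eqF // simplex_N_gt0.
have pq_qr : p * q - q * r = (r ^+ 2 - p ^+ 2) / N by rewrite /q; field.
rewrite simplex_r2 simplex_p2 in pq_qr.
rewrite leq_eqVlt => /orP[/eqP-> | kn]; rewrite leq_eqVlt => /orP[/eqP-> | jn].
- rewrite eqxx; under eq_bigr do rewrite /simplex_vertex ltnn.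
  by rewrite sumr_const card_ord -mulr_natl -expr2 simplex_r2 mulfV.
- rewrite gtn_eqF //; under eq_bigr do rewrite [X in X * _]/simplex_vertex ltnn.
  by rewrite -mulr_sumr sum_simplex_vertex // mulrN -expr2 simplex_r2.
- rewrite ltn_eqF //; under eq_bigr do rewrite [X in _ * X]/simplex_vertex ltnn.
  by rewrite -mulr_suml sum_simplex_vertex // mulNr -expr2 simplex_r2.
- under eq_bigr do rewrite [X in X * _]/simplex_vertex kn mulrDl -mulrA mulrCA.
  rewrite big_split /= (sum_delta (fun i => p * simplex_vertex j i)) //.
  rewrite -mulr_sumr sum_simplex_vertex // /simplex_vertex jn mulrN.
  case: eqP => _; rewrite ?mulr1 ?mulr0 ?add0r.
  + by rewrite mulrDr -expr2 simplex_p2 -addrA pq_qr; field.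
  + by rewrite pq_qr; field.
Qed.

Lemma regular_simplex_exists :
  exists W0 : 'M[R]_(d, n.+1), OB W0 /\ pairwise_dot_le W0 (- N^-1).
Proof.
pose W0 : 'M[R]_(d, n.+1) :=
  \matrix_(i, k) (if (i < n)%N then simplex_vertex k i else 0).
have W0_dot k j : dot (col k W0) (col j W0) = if k == j then 1 else - N^-1.
  rewrite -(simplex_vertex_dot (ltn_ord k) (ltn_ord j)).
  rewrite (big_ord_widen d (fun i => simplex_vertex k i * simplex_vertex j i) n_le_d).
  rewrite big_mkcond; apply: eq_bigr => i _.
  by rewrite !mxE; case: ifP; rewrite ?mul0r.
exists W0; split=> [k | k k' kk'].
- by rewrite vnormE W0_dot eqxx sqrtr1.
- by rewrite W0_dot eq_sym (negbTE kk').
Qed.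

End RegularSimplex.

Lemma argmax_rest_iff_one_simplex (R : realType) (d K : nat) :
  (2 <= K)%N -> (K <= d.+1)%N -> forall W : 'M[R]_(d, K),
  is_argmax_OB (@rho_one_vs_rest R d K) W <-> is_argmax_OB (@rho_one_vs_one R d K) W.
Proof.
move=> K_ge2 K_le; apply: (argmax_rest_iff_one K_ge2 (c := - (K%:R - 1)^-1)).
- exact: simplex_dot_ge_somewhere.
- case: K K_ge2 K_le => [//|n] K_ge2 K_le.
  by rewrite -natr1 addrK; apply: regular_simplex_exists.
- by move=> W W_OB; rewrite opprK; apply: simplex_rho_rest_ub.
- by move=> W W_OB; rewrite opprK; apply: simplex_pairwise_dot_le.
Qed.

Section Trigonometry.
Variable R : realType.
Implicit Types x y z a b : R.

Lemma cos_le_cos x y : 0 <= x -> x <= y -> y <= pi -> cos y <= cos x.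
Proof.
move=> x_ge0 xy y_le; have y_ge0 := le_trans x_ge0 xy; have x_le := le_trans xy y_le.
by rewrite leNgt ltr_cos ?in_itv /= -?leNgt ?x_ge0 ?y_ge0 ?x_le.
Qed.

Lemma cos_lt_cos x y : 0 <= x -> x < y -> y <= pi -> cos y < cos x.
Proof.
move=> x_ge0 xy y_le; have y_ge0 := le_trans x_ge0 (ltW xy).
have x_le := le_trans (ltW xy) y_le.
by rewrite ltr_cos ?in_itv /= ?x_ge0 ?y_ge0 ?x_le.
Qed.

Lemma cos_half z : cos z = 1 - 2 * sin (z / 2) ^+ 2.
Proof.
have -> : z = z / 2 + z / 2 by rewrite -splitr.
by rewrite cosD -!expr2 cos2sin2 -splitr; ring.
Qed.

Lemma sinM_sin x y : 2 * sin x * sin y = cos (x - y) - cos (x + y).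
Proof. by rewrite cosB cosD; ring. Qed.

Lemma cosD2pin x (n : nat) : cos (x + (pi *+ 2) *+ n) = cos x.
Proof. exact: (periodicn (@cosD2pi R)). Qed.

Lemma sinD2pin x (n : nat) : sin (x + (pi *+ 2) *+ n) = sin x.
Proof. exact: (periodicn (@sinD2pi R)). Qed.

Lemma cos2piB x : cos (pi *+ 2 - x) = cos x.
Proof. by rewrite addrC -[pi *+ 2]mulr1n cosD2pin cosN. Qed.

(* By symmetry [m <-> K - m] it suffices to treat [2 m <= K], where [cos] decreases. *)
Lemma cos_natmul_le (K m : nat) : (0 < m < K)%N ->
  cos (m%:R * (pi *+ 2 / K%:R)) <= cos (pi *+ 2 / K%:R :> R).
Proof.
move=> /andP[m_gt0 mK]; have K_gt0 : (0 : R) < K%:R by rewrite ltr0n (leq_trans _ mK).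
set tau : R := pi *+ 2 / K%:R.
have tau_gt0 : 0 < tau by rewrite divr_gt0 // mulrn_wgt0 // pi_gt0.
wlog m2_le : m m_gt0 mK / (m.*2 <= K)%N => [wlog_m2|].
  have [|m2_gt] := leqP m.*2 K; first exact: wlog_m2.
  have -> : m%:R * tau = pi *+ 2 - (K - m)%:R * tau.
    by rewrite natrB ?(ltnW mK) // /tau; field; rewrite gt_eqF.
  by rewrite cos2piB; apply: wlog_m2; lia.
apply: cos_le_cos; first exact: ltW.
  rewrite -[X in X <= _]mul1r; apply: ler_wpM2r; [exact: ltW | by rewrite ler1n].
have m2 : (m%:R : R) * 2 <= K%:R by rewrite -natrM ler_nat muln2.
have -> : m%:R * tau = (m%:R * 2) * pi / K%:R by rewrite /tau; ring.
by rewrite ler_pdivrMr // mulrC; apply: ler_wpM2l; first exact/ltW/pi_gt0.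
Qed.

Lemma polar_angle_exists x y : x ^+ 2 + y ^+ 2 = 1 ->
  exists th : R, [/\ 0 <= th, th < pi *+ 2, cos th = x & sin th = y].
Proof.
move=> xy1; have pi_gt0 := @pi_gt0 R; have y2_ge0 := sqr_ge0 y.
have x_ge : -1 <= x by nra.
have x_le : x <= 1 by nra.
have x_in : -1 <= x <= 1 by rewrite x_ge x_le.
have sqrt_y : Num.sqrt (1 - x ^+ 2) = `|y| by rewrite -sqrtr_sqr; congr Num.sqrt; lra.
have [y_ge0|y_lt0] := lerP 0 y.
  exists (acos x); split; rewrite ?acos_ge0 ?acosK //.
  - by apply: le_lt_trans (acos_lepi x_in) _; rewrite mulr2n; lra.
  - by rewrite sin_acos // sqrt_y ger0_norm.
have x_lt1 : x < 1.
  rewrite lt_neqAle x_le andbT; apply: contraTneq y_lt0 => x1.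
  have /eqP : y ^+ 2 = 0 by rewrite x1 expr1n in xy1; lra.
  by rewrite sqrf_eq0 => /eqP ->; rewrite ltxx.
have acos_gt0 : 0 < acos x by rewrite acos_gt0 // x_ge.
exists (pi *+ 2 - acos x); split.
- by have := acos_lepi x_in; rewrite mulr2n; lra.
- lra.
- by rewrite cos2piB acosK.
- rewrite addrC -[pi *+ 2]mulr1n sinD2pin sinN sin_acos // sqrt_y ltr0_norm //.
  by rewrite opprK.
Qed.

End Trigonometry.

Lemma sqr_dist_convex_unit (R : realType) d (u P Q : 'cV[R]_d) t :
  vnorm u = 1 -> vnorm P = 1 -> vnorm Q = 1 ->
  dot (u - ((1 - t) *: P + t *: Q)) (u - ((1 - t) *: P + t *: Q)) =
  2 * (1 - dot u P) - 2 * t * ((1 - dot u P) + (1 - dot P Q) - (1 - dot u Q))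
    + 2 * t ^+ 2 * (1 - dot P Q).
Proof.
move=> /dot_unit u1 /dot_unit P1 /dot_unit Q1.
rewrite dotBB !(dotDl, dotDr, dotZl, dotZr) u1 P1 Q1 ?(dotC Q u) ?(dotC P u) ?(dotC Q P).
ring.
Qed.

Section ArcSegment.
Variable R : realType.
Implicit Types a b : R.

(* With [A, B, C] the values of [1 - cos] at [a, b, a + b], the minimum over [t] of the
   quadratic is [(4 A C - (A + C - B)^2) / (2 C) = A B], and [1 - cos a = 2 sin (a/2)^2]. *)
Lemma arc_segment_sqr_dist a b : 0 <= a -> 0 <= b -> 0 < a + b -> a + b <= pi ->
  exists2 t : R, 0 <= t <= 1 &
    2 * (1 - cos a) - 2 * t * ((1 - cos a) + (1 - cos (a + b)) - (1 - cos b))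
      + 2 * t ^+ 2 * (1 - cos (a + b)) = (2 * sin (a / 2) * sin (b / 2)) ^+ 2.
Proof.
move=> a_ge0 b_ge0 ab_gt0 ab_le.
have cos_ab_lt1 : cos (a + b) < 1 by rewrite -cos0; apply: cos_lt_cos.
have cos_ab_le_b : cos (a + b) <= cos b by apply: cos_le_cos => //; lra.
have cos_ab_le_a : cos (a + b) <= cos a by apply: cos_le_cos => //; lra.
have := cos_le1 a; have := cos_le1 b.
set A := 1 - cos a; set B := 1 - cos b; set C := 1 - cos (a + b) => cb_le1 ca_le1.
have C_gt0 : 0 < C by rewrite /C; lra.
have gram : 4 * A * C - (A + C - B) ^+ 2 = 2 * A * B * C.
  have sin_sin : (sin a * sin b) ^+ 2 = (1 - cos a ^+ 2) * (1 - cos b ^+ 2).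
    by rewrite exprMn !sin2cos2.
  by rewrite /A /B /C cosD; nra.
exists ((A + C - B) / (2 * C)).
  by rewrite divr_ge0 /= ?ler_pdivrMr ?mulr_gt0 // /A /B /C; lra.
have -> : (2 * sin (a / 2) * sin (b / 2)) ^+ 2 = A * B.
  by rewrite /A /B (cos_half a) (cos_half b); ring.
set t := (A + C - B) / (2 * C).
have -> : 2 * A - 2 * t * (A + C - B) + 2 * t ^+ 2 * C
    = (4 * A * C - (A + C - B) ^+ 2) / (2 * C).
  by rewrite /t; field; rewrite gt_eqF.
by rewrite gram; field; rewrite gt_eqF.
Qed.

Lemma sin_halfM_sin_half a b :
  2 * sin (a / 2) * sin (b / 2) = 1 - cos ((a + b) / 2) - 2 * sin ((a - b) / 4) ^+ 2.
Proof.
rewrite sinM_sin (cos_half (a / 2 - b / 2)).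
have -> : (a / 2 - b / 2) / 2 = (a - b) / 4 by field.
have -> : a / 2 + b / 2 = (a + b) / 2 by field.
ring.
Qed.

Lemma sin_halfM_sin_half_ge0 a b : 0 <= a <= pi *+ 2 -> 0 <= b <= pi *+ 2 ->
  0 <= 2 * sin (a / 2) * sin (b / 2).
Proof.
have half_in x : 0 <= x <= pi *+ 2 -> 0 <= x / 2 <= pi.
  by case/andP=> x_ge0 x_le; rewrite divr_ge0 // ler_pdivrMr // mulr2n -mulr2n mulr_natr.
by move=> /half_in/sin_ge0_pi a_ge0 /half_in/sin_ge0_pi b_ge0; rewrite -mulrA !mulr_ge0.
Qed.

End ArcSegment.

Lemma dot2 (R : realType) (u v : 'cV[R]_2) :
  dot u v = u ord0 0 * v ord0 0 + u ord_max 0 * v ord_max 0.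
Proof.
rewrite /dot (bigD1 ord0) //= (bigD1 ord_max) //= big1 ?addr0 // => i /andP[i0 i1].
by case: i i0 i1 => [[|[|i]]] //= hi.
Qed.

Section PolygonBound.
Variables (R : realType) (K : nat).
Hypothesis K_ge4 : (4 <= K)%N.
Variable W : 'M[R]_(2, K).
Hypothesis W_OB : OB W.
Variable th : 'I_K -> R.
Hypotheses (th_ge0 : forall k, 0 <= th k) (th_lt : forall k, th k < pi *+ 2).
Hypotheses (th_cos : forall k, cos (th k) = W ord0 k)
           (th_sin : forall k, sin (th k) = W ord_max k).

Let K_gt0 : (0 < K)%N. Proof. exact: leq_trans K_ge4. Qed.
Let K_ge2 : (2 <= K)%N. Proof. exact: leq_trans K_ge4. Qed.
Let KR_gt0 : (0 : R) < K%:R. Proof. by rewrite ltr0n. Qed.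
Let k0 : 'I_K := Ordinal K_gt0.
Let by_angle := sort (fun i j : 'I_K => th i <= th j) (enum 'I_K).

Lemma size_by_angle : size by_angle = K.
Proof. by rewrite size_sort size_enum_ord. Qed.

Lemma by_angle_mono i j : (i <= j < K)%N ->
  th (nth k0 by_angle i) <= th (nth k0 by_angle j).
Proof.
move=> /andP[ij jK].
have sorted_th : sorted (fun i j : 'I_K => th i <= th j) by_angle.
  by apply: sort_sorted => ? ?; apply: le_total.
apply: (sorted_leq_nth _ _ _ sorted_th); rewrite ?inE ?size_by_angle ?(leq_ltn_trans ij) //.
by move=> ? ? ?; apply: le_trans.
Qed.

(* Columns enumerated cyclically by increasing angle; the angle of the [i]-th one is
   lifted by [2 pi] per completed turn, so that [lifted_angle] is nondecreasing in [i]. *)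
Definition ord_by_angle (i : nat) : 'I_K := nth k0 by_angle (i %% K).
Definition lifted_angle (i : nat) : R := th (ord_by_angle i) + (pi *+ 2) *+ (i %/ K).
Definition gap (i : nat) : R := lifted_angle i.+1 - lifted_angle i.

Lemma gap_ge0 i : 0 <= gap i.
Proof.
rewrite subr_ge0 /lifted_angle /ord_by_angle modnS divnS //.
case: ifP => [_ | K_ndvd] /=.
  rewrite add1n mulrS.
  by have := th_lt (nth k0 by_angle (i %% K)); have := th_ge0 (nth k0 by_angle 0); lra.
have iK : ((i %% K).+1 < K)%N.
  rewrite ltn_neqAle ltn_pmod // andbT; apply: contraFneq K_ndvd => iK.
  by rewrite (divn_eq i K) -addnS iK -mulSnr dvdn_mull.
by rewrite add0n lerD2r; apply: by_angle_mono; rewrite leqnSn iK.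
Qed.

Lemma lifted_angleDK i : lifted_angle (i + K) = lifted_angle i + pi *+ 2.
Proof.
rewrite /lifted_angle /ord_by_angle modnDr divnDr ?dvdnn // divnn K_gt0 addn1.
by rewrite mulrSr addrA.
Qed.

Lemma dot_ord_by_angle i j : dot (col (ord_by_angle i) W) (col (ord_by_angle j) W)
  = cos (lifted_angle j - lifted_angle i).
Proof.
rewrite dot2 !mxE cosB /lifted_angle !cosD2pin !sinD2pin !th_cos !th_sin; ring.
Qed.

Lemma ord_by_angle_neq i j : (i %% K != j %% K)%N -> ord_by_angle i != ord_by_angle j.
Proof.
move=> ij; rewrite /ord_by_angle nth_uniq ?size_by_angle ?ltn_pmod //.
by rewrite sort_uniq enum_uniq.
Qed.

Lemma modS_neq i : (i.+1 %% K != i %% K)%N.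
Proof.
rewrite modnS; case: ifP => [K_dvd | _]; last by apply/eqP; lia.
apply: contraTneq K_dvd => mod_i; rewrite -addn1 dvdn_addr; last by rewrite /dvdn -mod_i.
by rewrite dvdn1; apply: contraTneq K_ge2 => ->.
Qed.

Lemma ord_by_angle_surj k : exists2 i, (i < K)%N & ord_by_angle i = k.
Proof.
have k_in : k \in by_angle by rewrite mem_sort mem_enum.
have iK : (index k by_angle < K)%N by rewrite -[X in (_ < X)%N]size_by_angle index_mem.
by exists (index k by_angle); rewrite // /ord_by_angle modn_small // nth_index.
Qed.

Lemma sum_gap : \sum_(i < K) gap i = pi *+ 2.
Proof.
by rewrite -(big_mkord xpredT) telescope_sumr // -[K]add0n lifted_angleDK; ring.
Qed.

Lemma sum_gapS : \sum_(i < K) gap i.+1 = pi *+ 2.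
Proof.
rewrite -(big_mkord xpredT (fun i => gap i.+1)).
rewrite (telescope_sumr_eq (fun i => lifted_angle i.+1)) //.
by rewrite -addn1 addnC lifted_angleDK; ring.
Qed.

Let tau : R := pi *+ 2 / K%:R.

Lemma tau_gt0 : 0 < tau.
Proof. by rewrite divr_gt0 // mulrn_wgt0 // pi_gt0. Qed.

Lemma tau2_le_pi : tau *+ 2 <= pi.
Proof.
rewrite -mulrnAl ler_pdivrMr // !mulr2n.
have K4 : (4 : R) <= K%:R by rewrite (ler_nat R 4 K).
by have := @pi_gt0 R; nra.
Qed.

Lemma tauK : tau *+ K = pi *+ 2.
Proof. by rewrite -mulr_natl /tau mulrC divfK ?gt_eqF. Qed.

Lemma sum_gap_pair : \sum_(i < K) (gap i + gap i.+1) = \sum_(i < K) tau *+ 2.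
Proof.
by rewrite big_split /= sum_gap sum_gapS sumr_const card_ord [RHS]mulrnAC tauK mulr2n.
Qed.

Lemma gap_pair_le_pi i : gap i + gap i.+1 <= tau *+ 2 -> gap i + gap i.+1 <= pi.
Proof. by move/le_trans; apply; apply: tau2_le_pi. Qed.

Lemma dist_rest_le_gap i : gap i + gap i.+1 <= pi ->
  dist_rest W (ord_by_angle i.+1) <= 2 * sin (gap i / 2) * sin (gap i.+1 / 2).
Proof.
move=> gaps_le; have a_ge0 := gap_ge0 i; have b_ge0 := gap_ge0 i.+1.
have pi_gt0 := @pi_gt0 R.
have prod_ge0 : 0 <= 2 * sin (gap i / 2) * sin (gap i.+1 / 2).
  by apply: sin_halfM_sin_half_ge0; apply/andP; split => //; rewrite mulr2n; lra.
set P := col (ord_by_angle i) W; set u := col (ord_by_angle i.+1) W.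
set Q := col (ord_by_angle i.+2) W.
have i_Si : ord_by_angle i != ord_by_angle i.+1.
  by rewrite ord_by_angle_neq // eq_sym modS_neq.
have SSi_Si : ord_by_angle i.+2 != ord_by_angle i.+1.
  by rewrite ord_by_angle_neq // modS_neq.
have dot_prev : dot u P = cos (gap i) by rewrite dot_ord_by_angle -cosN opprB.
have dot_next : dot u Q = cos (gap i.+1) by apply: dot_ord_by_angle.
have dot_ends : dot P Q = cos (gap i + gap i.+1).
  by rewrite dot_ord_by_angle /gap; congr cos; ring.
have [gaps_gt0|gaps_le0] := ltrP 0 (gap i + gap i.+1); last first.
  have gap_i0 : gap i = 0 by lra.
  apply: le_trans (dist_rest_le (conv_rest_col W i_Si)) (le_trans _ prod_ge0).
  by rewrite vnormB_unit // dot_prev gap_i0 cos0 mulr1 subrr sqrtr0.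
have [t t01 sqr_dist] := arc_segment_sqr_dist a_ge0 b_ge0 gaps_gt0 gaps_le.
have PQ_hull := conv_rest_convex (conv_rest_col W i_Si) (conv_rest_col W SSi_Si) t01.
apply: le_trans (dist_rest_le PQ_hull) _.
rewrite vnormE sqr_dist_convex_unit // dot_prev dot_next dot_ends sqr_dist.
by rewrite sqrtr_sqr ger0_norm.
Qed.

Lemma dist_rest_le_mean_gap i : gap i + gap i.+1 <= pi ->
  dist_rest W (ord_by_angle i.+1) <= 1 - cos ((gap i + gap i.+1) / 2).
Proof.
move=> gaps_le; apply: le_trans (dist_rest_le_gap gaps_le) _.
by rewrite sin_halfM_sin_half; have := sqr_ge0 (sin ((gap i - gap i.+1) / 4)); lra.
Qed.

Lemma polygon_dot_ge_somewhere :
  exists k k' : 'I_K, k' != k /\ cos tau <= dot (col k W) (col k' W).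
Proof.
have [i _ gap_le] : exists2 i : 'I_K, true & gap i <= tau.
  apply: exists_le_of_sumr_le; first by exists k0.
  by rewrite sum_gap sumr_const card_ord tauK.
exists (ord_by_angle i), (ord_by_angle i.+1); split.
  by rewrite ord_by_angle_neq // modS_neq.
rewrite dot_ord_by_angle; apply: cos_le_cos gap_le _; first exact: gap_ge0.
by have := tau2_le_pi; have := tau_gt0; rewrite mulr2n; lra.
Qed.

Lemma polygon_rho_rest_ub : rho_one_vs_rest W <= 1 - cos tau.
Proof.
have [i _ gaps_le] : exists2 i : 'I_K, true & gap i + gap i.+1 <= tau *+ 2.
  by apply: exists_le_of_sumr_le; [exists k0 | rewrite sum_gap_pair].
apply: le_trans (rho_rest_le_dist K_ge2 W (ord_by_angle i.+1)) _.
apply: le_trans (dist_rest_le_mean_gap (gap_pair_le_pi gaps_le)) _.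
have := gap_ge0 i; have := gap_ge0 i.+1; have := tau2_le_pi; have := tau_gt0.
rewrite lerD2l lerN2 mulr2n in gaps_le * => *; apply: cos_le_cos; lra.
Qed.

Section Equality.
Hypothesis rho_ge : 1 - cos tau <= rho_one_vs_rest W.

Lemma dist_rest_ge i : 1 - cos tau <= dist_rest W (ord_by_angle i).
Proof. exact: le_trans rho_ge (rho_rest_le_dist K_ge2 W _). Qed.

Lemma gap_pair_ge i : tau *+ 2 <= gap i + gap i.+1.
Proof.
rewrite leNgt; apply/negP => gaps_lt.
have := dist_rest_le_mean_gap (gap_pair_le_pi (ltW gaps_lt)).
move/(le_trans (dist_rest_ge i.+1)).
suff : cos tau < cos ((gap i + gap i.+1) / 2) by lra.
have := gap_ge0 i; have := gap_ge0 i.+1; have := tau2_le_pi; have := tau_gt0.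
rewrite mulr2n in gaps_lt * => *; apply: cos_lt_cos; lra.
Qed.

Lemma gap_pair_eq i : (i < K)%N -> gap i + gap i.+1 = tau *+ 2.
Proof.
move=> iK.
exact: (eq_of_sumr_eq_ge (fun j : 'I_K => gap_pair_ge j) sum_gap_pair (Ordinal iK)).
Qed.

(* Equality [2 sin (a/2) sin (b/2) = 1 - cos ((a+b)/2)] forces [sin ((a-b)/4) = 0]. *)
Lemma gap_eqS i : (i < K)%N -> gap i = gap i.+1.
Proof.
move=> iK; have gaps_eq := gap_pair_eq iK.
have a_ge0 := gap_ge0 i; have b_ge0 := gap_ge0 i.+1.
have := tau2_le_pi; have := @pi_gt0 R => pi_gt0 tau2_le.
have gaps_le : gap i + gap i.+1 <= tau *+ 2 by rewrite gaps_eq.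
have := le_trans (dist_rest_ge i.+1) (dist_rest_le_gap (gap_pair_le_pi gaps_le)).
rewrite sin_halfM_sin_half gaps_eq mulr2n.
have -> : (tau + tau) / 2 = tau by field.
move=> sin_le; have sin_eq0 : sin ((gap i - gap i.+1) / 4) = 0.
  by apply/eqP; rewrite -sqrf_eq0 eq_le sqr_ge0 andbT; lra.
suff : (gap i - gap i.+1) / 4 = 0 by lra.
apply: sin_inj; rewrite ?sin_eq0 ?sin0 // !in_itv /=; last by lra.
by rewrite mulr2n in gaps_eq tau2_le; apply/andP; split; lra.
Qed.

Lemma gap_eq_tau i : (i < K)%N -> gap i = tau.
Proof.
by move=> iK; have := gap_pair_eq iK; rewrite -gap_eqS // mulr2n; lra.
Qed.

Lemma lifted_angleD i n : (i + n <= K)%N ->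
  lifted_angle (i + n) - lifted_angle i = n%:R * tau.
Proof.
elim: n => [|n IHn] inK; first by rewrite addn0 subrr mul0r.
have inK' : (i + n < K)%N by rewrite -addnS.
have := gap_eq_tau inK'; rewrite /gap -addnS => gap_tau.
by rewrite -natr1 mulrDl mul1r -(IHn (ltnW inK')); lra.
Qed.

Lemma polygon_pairwise_dot_le : pairwise_dot_le W (cos tau).
Proof.
have dot_lt i j : (i < j < K)%N ->
    dot (col (ord_by_angle i) W) (col (ord_by_angle j) W) <= cos tau.
  case/andP=> ij jK; rewrite dot_ord_by_angle -(subnKC (ltnW ij)) lifted_angleD.
    by apply: cos_natmul_le; rewrite subn_gt0 ij (leq_ltn_trans (leq_subr _ _)).
  by rewrite subnKC ltnW // ltnW.
move=> k k'; have [i iK <-] := ord_by_angle_surj k.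
have [j jK <-] := ord_by_angle_surj k'; have [ij|ji|ij] := ltngtP i j => kk'.
- by apply: dot_lt; rewrite ij.
- by rewrite dotC; apply: dot_lt; rewrite ji.
- by rewrite ij eqxx in kk'.
Qed.

End Equality.

End PolygonBound.

Lemma polar_angles_exist (R : realType) (K : nat) (W : 'M[R]_(2, K)) : OB W ->
  exists th : 'I_K -> R, forall k, [/\ 0 <= th k, th k < pi *+ 2,
    cos (th k) = W ord0 k & sin (th k) = W ord_max k].
Proof.
move=> W_OB; have col_sqr k : W ord0 k ^+ 2 + W ord_max k ^+ 2 = 1.
  by have := dot_unit (W_OB k); rewrite dot2 !mxE -!expr2.
by have [th th_k] := choice (fun k => polar_angle_exists (col_sqr k)); exists th.
Qed.

Lemma regular_polygon_exists (R : realType) (K : nat) : (0 < K)%N ->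
  exists W0 : 'M[R]_(2, K), OB W0 /\ pairwise_dot_le W0 (cos (pi *+ 2 / K%:R)).
Proof.
move=> K_gt0; set tau : R := pi *+ 2 / K%:R.
pose W0 : 'M[R]_(2, K) :=
  \matrix_(i, k) (if i == ord0 then cos (k%:R * tau) else sin (k%:R * tau)).
have W0_dot k k' : dot (col k W0) (col k' W0) = cos (k'%:R * tau - k%:R * tau).
  by rewrite dot2 !mxE /= cosB; ring.
have dot_lt (k k' : 'I_K) : (k < k')%N -> dot (col k W0) (col k' W0) <= cos tau.
  move=> kk'; rewrite W0_dot -mulrBl -natrB ?(ltnW kk') //; apply: cos_natmul_le.
  by rewrite subn_gt0 kk' (leq_ltn_trans (leq_subr _ _)).
exists W0; split=> [k | k k' kk'].
  by rewrite vnormE W0_dot subrr cos0 sqrtr1.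
have [lt|gt|eq] := ltngtP k k'.
- exact: dot_lt.
- by rewrite dotC dot_lt.
- by rewrite (val_inj eq) eqxx in kk'.
Qed.

Lemma argmax_rest_iff_one_polygon (R : realType) (K : nat) : (4 <= K)%N ->
  forall W : 'M[R]_(2, K),
  is_argmax_OB (@rho_one_vs_rest R 2 K) W <-> is_argmax_OB (@rho_one_vs_one R 2 K) W.
Proof.
move=> K_ge4; have K_ge2 : (2 <= K)%N by apply: leq_trans K_ge4.
apply: (argmax_rest_iff_one K_ge2 (c := cos (pi *+ 2 / K%:R))).
- move=> W W_OB; have [th /all_and4[]] := polar_angles_exist W_OB.
  exact: polygon_dot_ge_somewhere.
- exact/regular_polygon_exists/(leq_trans _ K_ge2).
- move=> W W_OB; have [th /all_and4[]] := polar_angles_exist W_OB.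
  exact: polygon_rho_rest_ub.
- move=> W W_OB; have [th /all_and4[]] := polar_angles_exist W_OB.
  exact: polygon_pairwise_dot_le.
Qed.

Unset Implicit Arguments.

Theorem mainTheorem9 (R : realType) (d K : nat) :
  (2 <= K)%N -> (1 <= d)%N -> (d = 2%N \/ (K <= d.+1)%N) ->
  forall W : 'M[R]_(d, K),
    is_argmax_OB (@rho_one_vs_rest R d K) W <-> is_argmax_OB (@rho_one_vs_one R d K) W.
Proof.
move=> K_ge2 _ d2_or_K_le.
have [K_le|K_gt] := leqP K d.+1; first exact: argmax_rest_iff_one_simplex.
case: d2_or_K_le K_gt => [-> K_ge4 | K_le]; last by rewrite ltnNge K_le.
exact: argmax_rest_iff_one_polygon.
Qed.
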